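(* Let $f,g:\{0,1,\dots,n\}\to\mathbb{R}$ be given as arrays, where $f$ is concave and $g$ is oscillating concave. Then the (max,+) convolution $h(k)=\max_{1\le i\le k}\bigl(f(i)+g(k-i)\bigr)$ for $1\le k\le n$ can be computed for all $k$ in $O(n)$ total time.
   Context: $f$ is concave if $f(i+1)-f(i)$ is non-increasing in $i$. A function $g$ is oscillating concave if for all $k$ (whenever the arguments lie in the domain): (1) $g(2k)-g(2k-2)\ge g(2k+2)-g(2k)$; (2) $g(2k+2)-g(2k+1)\ge g(2k+1)-g(2k)$; (3) $g(2k+1)-g(2k)\le g(2k)-g(2k-1)$; (4) $g(2k+1)-g(2k)$ is (weakly) decreasing in $k$; (5) $g(2k)-g(2k-1)$ is (weakly) decreasing in $k$. Arithmetic and comparisons of values take $O(1)$ time. *)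

From mathcomp Require Import all_boot all_order all_algebra.
From mathcomp Require Import reals.
Set Implicit Arguments. Unset Strict Implicit. Unset Printing Implicit Defensive.
Import Order.TTheory GRing.Theory Num.Theory.
Local Open Scope ring_scope.

(* Cost model.  An algorithm manipulates values of an ABSTRACT type T  *)
(* (it is polymorphic in T, so it can only touch values through the    *)
(* primitives below).  Each primitive (array read of f or g, addition, *)
(* subtraction, multiplication, comparison) costs one unit; control    *)
(* flow / index bookkeeping is expressed by Coq functions.             *)
Inductive comp (T A : Type) : Type :=
| Ret  : A -> comp T A
| ReadF : nat -> (T -> comp T A) -> comp T A
| ReadG : nat -> (T -> comp T A) -> comp T A
| Add  : T -> T -> (T -> comp T A) -> comp T A
| Sub  : T -> T -> (T -> comp T A) -> comp T A
| Mul  : T -> T -> (T -> comp T A) -> comp T A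
| Leq  : T -> T -> (bool -> comp T A) -> comp T A.

Arguments Ret {T A}.
Arguments ReadF {T A}.
Arguments ReadG {T A}.
Arguments Add {T A}.
Arguments Sub {T A}.
Arguments Mul {T A}.
Arguments Leq {T A}.

Fixpoint run (R : realType) (f g : nat -> R) (A : Type) (c : comp R A)
  : A * nat :=
  match c with
  | Ret a => (a, 0%N)
  | ReadF i k => let r := run f g (k (f i)) in (r.1, r.2.+1)
  | ReadG i k => let r := run f g (k (g i)) in (r.1, r.2.+1)
  | Add x y k => let r := run f g (k (x + y)) in (r.1, r.2.+1)
  | Sub x y k => let r := run f g (k (x - y)) in (r.1, r.2.+1)
  | Mul x y k => let r := run f g (k (x * y)) in (r.1, r.2.+1)
  | Leq x y k => let r := run f g (k (x <= y)) in (r.1, r.2.+1)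
  end.

Definition algorithm := nat -> forall T : Type, comp T (seq T).

Definition concave_on (R : realType) (n : nat) (f : nat -> R) : Prop :=
  forall i : nat, (i.+2 <= n)%N -> f i.+2 - f i.+1 <= f i.+1 - f i.

Definition osc_concave_on (R : realType) (n : nat) (g : nat -> R) : Prop :=
  (* (1) g(2k)-g(2k-2) >= g(2k+2)-g(2k), k >= 1 *)
  (forall k : nat, (1 <= k)%N -> (k.*2.+2 <= n)%N ->
      g k.*2.+2 - g k.*2 <= g k.*2 - g k.*2.-2) /\
  (* (2) g(2k+2)-g(2k+1) >= g(2k+1)-g(2k) *)
  (forall k : nat, (k.*2.+2 <= n)%N ->
      g k.*2.+1 - g k.*2 <= g k.*2.+2 - g k.*2.+1) /\
  (* (3) g(2k+1)-g(2k) <= g(2k)-g(2k-1), k >= 1 *)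
  (forall k : nat, (1 <= k)%N -> (k.*2.+1 <= n)%N ->
      g k.*2.+1 - g k.*2 <= g k.*2 - g k.*2.-1) /\
  (* (4) g(2k+1)-g(2k) weakly decreasing in k *)
  (forall k : nat, (k.+1.*2.+1 <= n)%N ->
      g k.+1.*2.+1 - g k.+1.*2 <= g k.*2.+1 - g k.*2) /\
  (* (5) g(2k)-g(2k-1) weakly decreasing in k (k >= 1) *)
  (forall k : nat, (1 <= k)%N -> (k.+1.*2 <= n)%N ->
      g k.+1.*2 - g k.+1.*2.-1 <= g k.*2 - g k.*2.-1).

Definition maxplus_conv (R : realType) (f g : nat -> R) (k : nat) : R :=
  \big[Num.max/(f 1%N + g (k - 1)%N)]_(1 <= i < k.+1) (f i + g (k - i)%N).

From Pilot Require Import Defs.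
From mathcomp Require Import all_boot all_order all_algebra.
From mathcomp Require Import reals.
From mathcomp Require Import zify lra.
Set Implicit Arguments.
Unset Strict Implicit.
Unset Printing Implicit Defensive.
Import Order.TTheory GRing.Theory Num.Theory.

(* The odd- and even-indexed subsequences of f are concave, and conditions
   (1), (4), (5) of oscillating concavity say exactly that the even- and
   odd-indexed subsequences of g are concave.  The (max,+) convolution of two
   concave sequences F, G is computed for all arguments s at once by a greedy
   merge: starting from (0, 0), advance whichever pointer gains more.  Sorting
   the terms f(i) + g(k - i) by the parity of i, h(k) is the maximum of two
   such merged values, so four merges of length about n/2 followed by two
   pointwise maxima compute h with O(n) operations. *)

Section Programs.
Context {T : Type}.

Fixpoint bind {A B : Type} (c : Defs.comp T A) (k : A -> Defs.comp T B) : Defs.comp T B :=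
  match c with
  | Ret a => k a
  | ReadF i c' => ReadF i (fun x => bind (c' x) k)
  | ReadG i c' => ReadG i (fun x => bind (c' x) k)
  | Add x y c' => Add x y (fun z => bind (c' z) k)
  | Defs.Sub x y c' => Defs.Sub x y (fun z => bind (c' z) k)
  | Mul x y c' => Mul x y (fun z => bind (c' z) k)
  | Leq x y c' => Leq x y (fun b => bind (c' b) k)
  end.

Fixpoint merge (fi gi : nat -> nat) (L : nat) (p : nat * nat) : Defs.comp T (seq T) :=
  ReadF (fi p.1) (fun x => ReadG (gi p.2) (fun y => Add x y (fun v =>
  if L is L'.+1 then
    ReadF (fi p.1.+1) (fun x' => ReadG (gi p.2.+1) (fun y' =>
    Add x' y (fun right => Add x y' (fun up => Leq up right (fun b =>
    bind (merge fi gi L' (if b then (p.1.+1, p.2) else (p.1, p.2.+1)))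
         (fun r => Ret (v :: r)))))))
  else Ret [:: v]))).

Definition merge_parity (c d L : nat) : Defs.comp T (seq T) :=
  merge (fun t => t.*2 + c)%N (fun m => m.*2 + d)%N L (0, 0)%N.

Fixpoint zip_max (l1 l2 : seq T) : Defs.comp T (seq T) :=
  match l1, l2 with
  | x :: l1', y :: l2' =>
      Leq x y (fun b => bind (zip_max l1' l2') (fun r => Ret ((if b then y else x) :: r)))
  | _, _ => Ret [::]
  end.

End Programs.

Fixpoint interleave {A : Type} (l1 l2 : seq A) : seq A :=
  match l1, l2 with
  | x :: l1', y :: l2' => x :: y :: interleave l1' l2'
  | _, _ => [::]
  end.

Definition conv_alg : algorithm := fun n T =>
  bind (merge_parity 1 0 n./2.+1) (fun odd_even : seq T =>
  bind (merge_parity 2 1 n./2) (fun even_odd =>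
  bind (merge_parity 1 1 n./2.+1) (fun odd_odd =>
  bind (merge_parity 2 0 n./2.+1) (fun even_even =>
  if odd_even is h1 :: odd_even' then
    bind (zip_max odd_even' even_odd) (fun h_odd =>
    bind (zip_max odd_odd even_even) (fun h_even =>
    Ret (take n (interleave (h1 :: h_odd) h_even))))
  else Ret [::])))).

Lemma interleave_map_iota (A : Type) (P Q : nat -> A) i m :
  interleave [seq P u | u <- iota i m] [seq Q u | u <- iota i m] =
  [seq if odd j then Q j./2 else P j./2 | j <- iota i.*2 m.*2].
Proof.
elim: m i => [|m IHm] i //=.
by rewrite IHm doubleS /= odd_double uphalf_double doubleK.
Qed.

Lemma map_iota0S (A : Type) (P : nat -> A) m :
  [seq P s | s <- iota 0 m.+1] = P 0%N :: [seq P s.+1 | s <- iota 0 m].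
Proof. by rewrite /= (iotaDl 1 0) -map_comp. Qed.

Lemma traject_iter (A : Type) (h : A -> A) x m :
  traject h x m = [seq iter s h x | s <- iota 0 m].
Proof.
elim: m x => [|m IHm] x //.
by rewrite map_iota0S /= IHm; congr (_ :: _); apply: eq_map => s; rewrite -iterSr.
Qed.

Local Open Scope ring_scope.

Section Merge.
Variable R : realType.
Implicit Types F G : nat -> R.

Definition merge_step F G (p : nat * nat) : nat * nat :=
  if F p.1 + G p.2.+1 <= F p.1.+1 + G p.2 then (p.1.+1, p.2) else (p.1, p.2.+1).

Definition merge_path F G s := iter s (merge_step F G) (0, 0)%N.

Definition merge_value F G s := F (merge_path F G s).1 + G (merge_path F G s).2.

Lemma concave_slope_le n F a b : concave_on n F -> (a <= b)%N -> (b < n)%N ->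
  F b.+1 - F b <= F a.+1 - F a.
Proof.
move=> F_cvx le_ab; elim: b le_ab => [|b IHb]; first by rewrite leqn0 => /eqP ->.
rewrite leq_eqVlt => /orP[/eqP -> // | lt_ab] lt_bn.
have := IHb lt_ab (ltnW lt_bn); have := F_cvx b lt_bn; lra.
Qed.

Lemma merge_step_ge F G p :
  F p.1.+1 + G p.2 <= F (merge_step F G p).1 + G (merge_step F G p).2 /\
  F p.1 + G p.2.+1 <= F (merge_step F G p).1 + G (merge_step F G p).2.
Proof.
rewrite /merge_step; case: ifP => [-> | /negbT]; rewrite /= ?lexx // -ltNge.
by move=> /ltW ->.
Qed.

Lemma merge_value_max F G s : concave_on s F -> concave_on s G ->
  ((merge_path F G s).1 + (merge_path F G s).2 = s)%N /\
  forall t, (t <= s)%N -> F t + G (s - t)%N <= merge_value F G s.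
Proof.
elim: s => [|s IHs] F_cvx G_cvx.
  by split=> // t; rewrite leqn0 => /eqP ->.
have restrict (H : nat -> R) : concave_on s.+1 H -> concave_on s H.
  by move=> H_cvx i lt_is; apply/H_cvx/ltnW.
have [size_p opt_p] := IHs (restrict F F_cvx) (restrict G G_cvx).
rewrite /merge_value /merge_path iterS -/(merge_path F G s) in opt_p *.
set p := merge_path F G s in size_p opt_p *.
have [geF geG] := merge_step_ge F G p.
split; first by rewrite /merge_step; case: ifP => _ /=; lia.
move=> t le_ts; have [lt_pt | le_tp] := ltnP p.1 t.
- case: t lt_pt le_ts => [//|t] le_pt le_ts.
  have := opt_p t le_ts; have := concave_slope_le (b := t) F_cvx le_pt le_ts.
  rewrite subSS; lra.
- have le_pts : (p.2 <= s - t)%N by lia.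
  have := opt_p t ltac:(lia).
  have := concave_slope_le G_cvx le_pts (leq_subr t s).
  have -> : (s.+1 - t = (s - t).+1)%N by lia.
  lra.
Qed.

End Merge.

Section Convolution.
Variables (R : realType) (n : nat) (f g : nat -> R).
Hypotheses (f_concave : concave_on n f) (g_osc_concave : osc_concave_on n g).

Lemma concave_on_double c s : (s.*2 + c <= n)%N ->
  concave_on s (fun t => f (t.*2 + c)%N).
Proof.
move=> le_sn i lt_is.
have -> : (i.+2.*2 + c = (i.*2 + c).+4)%N by lia.
have -> : (i.+1.*2 + c = (i.*2 + c).+2)%N by lia.
have := f_concave (i := i.*2 + c) ltac:(lia).
have := f_concave (i := (i.*2 + c).+1) ltac:(lia).
have := f_concave (i := (i.*2 + c).+2) ltac:(lia).
lra.
Qed.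

Lemma osc_concave_on_double c s : (c <= 1)%N -> (s.*2 + c <= n)%N ->
  concave_on s (fun m => g (m.*2 + c)%N).
Proof.
case: g_osc_concave => even_cvx [_ [_ [odd_dec even_dec]]] le_c1 le_sn i lt_is.
case: c le_c1 le_sn => [|[|//]] _ le_sn.
- have := even_cvx i.+1 isT ltac:(lia).
  by rewrite !addn0 !doubleS /=; lra.
- have := odd_dec i.+1 ltac:(lia); have := even_dec i.+1 isT ltac:(lia).
  by rewrite !addn1 !doubleS /=; lra.
Qed.

Definition parity_conv (c d s : nat) : R :=
  merge_value (fun t => f (t.*2 + c)%N) (fun m => g (m.*2 + d)%N) s.

Definition is_parity_max (k c : nat) (v : R) : Prop :=
  (exists2 i, (1 <= i <= k)%N & v = f i + g (k - i)%N) /\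
  forall t, (t.*2 + c <= k)%N -> f (t.*2 + c)%N + g (k - (t.*2 + c))%N <= v.

Lemma parity_conv_max c d s : (0 < c)%N -> (d <= 1)%N ->
  (s.*2 + c <= n)%N -> (s.*2 + d <= n)%N ->
  is_parity_max (s.*2 + c + d) c (parity_conv c d s).
Proof.
move=> c_gt0 le_d1 le_scn le_sdn.
have [size_p opt_p] :=
  merge_value_max (concave_on_double le_scn) (osc_concave_on_double le_d1 le_sdn).
rewrite /parity_conv /merge_value in opt_p *.
set p := merge_path _ _ s in size_p opt_p *.
split.
- exists (p.1.*2 + c)%N; first lia.
  by have -> : (s.*2 + c + d - (p.1.*2 + c) = p.2.*2 + d)%N by lia.
- move=> t le_tk; have := opt_p t ltac:(lia).
  by have -> : (s.*2 + c + d - (t.*2 + c) = (s - t).*2 + d)%N by lia.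
Qed.

Lemma maxplus_conv_eq k v :
  (exists2 i, (1 <= i <= k)%N & v = f i + g (k - i)%N) ->
  (forall i, (1 <= i <= k)%N -> f i + g (k - i)%N <= v) ->
  maxplus_conv f g k = v.
Proof.
move=> [i le_1ik ->] ub; apply/le_anti/andP; split.
- rewrite /maxplus_conv big_seq_cond; apply: bigmax_le => [|j]; first by apply: ub; lia.
  by rewrite mem_index_iota andbT => j_in; apply: ub; lia.
- by apply: (le_bigmax_seq _ i) => //; rewrite mem_index_iota; lia.
Qed.

Lemma maxplus_conv_max k v1 v2 : is_parity_max k 1 v1 -> is_parity_max k 2 v2 ->
  maxplus_conv f g k = Num.max v1 v2.
Proof.
move=> [[i1 le_i1 ->] ub1] [[i2 le_i2 ->] ub2]; apply: maxplus_conv_eq.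
  by case: leP => _; [exists i2 | exists i1].
move=> i /andP[le_1i le_ik].
have [t [i_odd | i_even]] : exists t, i = (t.*2 + 1)%N \/ i = (t.*2 + 2)%N.
  by exists i.-1./2; lia.
- by rewrite i_odd le_max ub1 // -i_odd.
- by rewrite i_even le_max ub2 ?orbT // -i_even.
Qed.

Definition conv_odd (u : nat) : R :=
  if u is u'.+1 then Num.max (parity_conv 1 0 u) (parity_conv 2 1 u')
  else parity_conv 1 0 0.

Definition conv_even (u : nat) : R := Num.max (parity_conv 1 1 u) (parity_conv 2 0 u).

Lemma maxplus_conv_odd u : (u.*2.+1 <= n)%N -> maxplus_conv f g u.*2.+1 = conv_odd u.
Proof.
case: u => [|u] le_kn.
- have [attained ub] := @parity_conv_max 1 0 0 isT isT le_kn (ltnW le_kn).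
  apply: maxplus_conv_eq => // i /andP[le_1i le_i1].
  by have -> : i = (0.*2 + 1)%N by lia; apply: ub.
- apply: maxplus_conv_max.
  + have -> : (u.+1.*2.+1 = u.+1.*2 + 1 + 0)%N by lia.
    by apply: parity_conv_max; lia.
  + have -> : (u.+1.*2.+1 = u.*2 + 2 + 1)%N by lia.
    by apply: parity_conv_max; lia.
Qed.

Lemma maxplus_conv_even u : (u.*2.+2 <= n)%N -> maxplus_conv f g u.*2.+2 = conv_even u.
Proof.
move=> le_kn; apply: maxplus_conv_max.
- have -> : (u.*2.+2 = u.*2 + 1 + 1)%N by lia.
  by apply: parity_conv_max; lia.
- have -> : (u.*2.+2 = u.*2 + 2 + 0)%N by lia.
  by apply: parity_conv_max; lia.
Qed.

End Convolution.

Section Run.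
Variables (R : realType) (f g : nat -> R).

Lemma run_bind (A B : Type) (c : Defs.comp R A) (k : A -> Defs.comp R B) :
  run f g (bind c k) =
  ((run f g (k (run f g c).1)).1, (run f g c).2 + (run f g (k (run f g c).1)).2)%N.
Proof.
elim: c => [a|i c IHc|i c IHc|x y c IHc|x y c IHc|x y c IHc|x y c IHc] /=;
  rewrite ?IHc //.
by case: (run f g (k a)).
Qed.

Lemma run_merge fi gi L p :
  run f g (merge fi gi L p) =
  ([seq f (fi q.1) + g (gi q.2) |
     q <- traject (merge_step (fun t => f (fi t)) (fun m => g (gi m))) p L.+1],
   (8 * L).+3%N).
Proof.
elim: L p => [|L IHL] p //=.
by rewrite run_bind IHL /=; congr (_, _); lia.
Qed.

Lemma run_merge_parity c d L :
  run f g (merge_parity c d L) =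
  ([seq parity_conv f g c d s | s <- iota 0 L.+1], (8 * L).+3%N).
Proof. by rewrite run_merge traject_iter -map_comp. Qed.

Lemma run_zip_max (l1 l2 : seq R) :
  run f g (zip_max l1 l2) = ([seq Num.max p.1 p.2 | p <- zip l1 l2], size (zip l1 l2)).
Proof.
elim: l1 l2 => [|x l1 IHl] [|y l2] //=.
by rewrite run_bind IHl /= maxEle addn0.
Qed.

Lemma run_conv_alg n :
  run f g (conv_alg n R) =
  (take n (interleave [seq conv_odd f g u | u <- iota 0 n./2.+2]
                      [seq conv_even f g u | u <- iota 0 n./2.+2]),
   (34 * n./2 + 39)%N).
Proof.
rewrite /conv_alg; do 4 (rewrite run_bind run_merge_parity; cbn [fst snd]).
rewrite map_iota0S; cbn [fst snd].
do 2 (rewrite run_bind run_zip_max; cbn [fst snd]).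
rewrite !zip_map !size_map !size_iota [in RHS]map_iota0S.
rewrite -!map_comp; cbn [run fst snd]; congr (_, _); lia.
Qed.

End Run.

Theorem lemma6 (R : realType) :
  exists (alg : algorithm) (C : nat),
    forall (n : nat) (f g : nat -> R),
      concave_on n f -> osc_concave_on n g ->
      (run f g (alg n R)).1 = [seq maxplus_conv f g k | k <- iota 1 n] /\
      ((run f g (alg n R)).2 <= C * n.+1)%N.
Proof.
exists conv_alg, 40%N => n f g f_concave g_osc.
rewrite run_conv_alg; split; last by cbn [snd]; lia.
cbn [fst]; rewrite interleave_map_iota -map_take take_iota (iotaDl 1 0) -map_comp.
have -> : minn n (n./2.+2).*2 = n by lia.
apply/eq_in_map => j; rewrite mem_iota => /andP[_ lt_jn] /=.
have := odd_double_half j; case: (odd j) => /= j_eq.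
- have -> : (1 + j = j./2.*2.+2)%N by lia.
  by rewrite (maxplus_conv_even f_concave g_osc) //; lia.
- have -> : (1 + j = j./2.*2.+1)%N by lia.
  by rewrite (maxplus_conv_odd f_concave g_osc) //; lia.
Qed.
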